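(* Let $c,d>0$ with $\frac1c+\frac1d\ge1$ and $g(x)=xF(c,d;c+d;x)$ for $x\in(0,1)$. Then for all $x>0$ and $p,q\in\mathbb{R}$, $$g\!\left(\frac{x^p}{1+x^p}\right)g\!\left(\frac{x^q}{1+x^q}\right)\le g^2\!\left(\frac{x^{(p+q)/2}}{1+x^{(p+q)/2}}\right).$$
   Context: $F(a,b;c;x)$ is the Gaussian hypergeometric function $\sum_{n\ge0}\frac{(a)_n(b)_n}{(c)_n}\frac{x^n}{n!}$ ($|x|<1$), with $(a)_n=a(a+1)\cdots(a+n-1)$, $(a)_0=1$. $g^2(y)=(g(y))^2$. *)

From Stdlib Require Import Reals Lra ClassicalEpsilon.
Open Scope R_scope.

Fixpoint poch (a : R) (n : nat) : R :=
  match n with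
  | O => 1
  | S k => poch a k * (a + INR k)
  end.

Definition hyp_term (a b c x : R) (n : nat) : R :=
  poch a n * poch b n / poch c n * x ^ n / INR (Factorial.fact n).

(* F(a,b;c;x) := sum of the series (chosen by Hilbert epsilon; it is the
   genuine sum whenever the series converges, e.g. for |x| < 1, c > 0). *)
Definition hypF (a b c x : R) : R :=
  epsilon (inhabits 0) (fun l => infinite_sum (hyp_term a b c x) l).

Definition g (c d x : R) : R := x * hypF c d (c + d) x.

From Stdlib Require Import Reals Lra Lia ClassicalEpsilon.
Open Scope R_scope.

(* With s = e^u / (1 + e^u) the arguments become s at u = p ln x, q ln x and
   their midpoint, so the claim is midpoint concavity of u |-> ln (s F(s)) for
   F = F(c,d;c+d;.).  It is proved for the partial sums F_N and passed to the
   limit.  The u-derivative of ln (s F_N(s)) is 1 - s (1 - (1-s)F_N'(s)/F_N(s)).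
   The coefficients of (1-s)F_N' are those of F_N times c d / (c + d + n), except
   for a negative top one; these weights decrease in n and are at most 1 because
   1/c + 1/d >= 1.  A monotone-ratio argument then makes (1-s)F_N'/F_N
   decreasing and at most 1, hence the derivative decreasing in u. *)

Definition psum (a : nat -> R) (N : nat) (s : R) : R :=
  sum_f_R0 (fun n => a n * s ^ n) N.

Lemma sum_f_R0_mult (f g : nat -> R) (N : nat) :
  sum_f_R0 f N * sum_f_R0 g N =
  sum_f_R0 (fun i => sum_f_R0 (fun j => f i * g j) N) N.
Proof.
  rewrite Rmult_comm, scal_sum; apply sum_eq; intros i _.
  rewrite scal_sum; apply sum_eq; intros j _; ring.
Qed.

Lemma sum_f_R0_nonpos (f : nat -> R) (N : nat) :
  (forall n, (n <= N)%nat -> f n <= 0) -> sum_f_R0 f N <= 0.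
Proof.
  intros Hf; apply Rle_trans with (sum_f_R0 (fun _ => 0) N).
  - exact (sum_Rle _ _ N Hf).
  - rewrite sum_cte; lra.
Qed.

Lemma sum_f_R0_eq_but_last (f g : nat -> R) (N : nat) :
  (forall n, (n < N)%nat -> f n = g n) ->
  sum_f_R0 f N = sum_f_R0 g N + (f N - g N).
Proof.
  intros Hfg; destruct N as [|N]; simpl; [ring|].
  rewrite (sum_eq f g N) by (intros; apply Hfg; lia); ring.
Qed.

Lemma derivable_pt_lim_psum (a : nat -> R) (N : nat) (s : R) :
  derivable_pt_lim (psum a N) s (sum_f_R0 (fun n => a n * (INR n * s ^ pred n)) N).
Proof.
  unfold psum; induction N as [|N IH]; simpl sum_f_R0.
  - apply (derivable_pt_lim_scal (fun y => y ^ 0)), derivable_pt_lim_pow.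
  - apply (derivable_pt_lim_plus (fun y => sum_f_R0 (fun n => a n * y ^ n) N)
      (fun y => a (S N) * y ^ S N)); [exact IH|].
    apply (derivable_pt_lim_scal (fun y => y ^ S N)), derivable_pt_lim_pow.
Qed.

(* Coefficients of [(1 - s) p'(s)] for [p = psum a N]. *)
Definition one_sub_deriv_coef (a : nat -> R) (N n : nat) : R :=
  if (n <? N)%nat then INR (S n) * a (S n) - INR n * a n else - INR N * a N.

Lemma one_sub_mul_deriv_psum (a : nat -> R) (N : nat) (s : R) :
  (1 - s) * sum_f_R0 (fun n => a n * (INR n * s ^ pred n)) N =
  psum (one_sub_deriv_coef a N) N s.
Proof.
  unfold psum, one_sub_deriv_coef; induction N as [|N IH].
  - simpl; ring.
  - rewrite !tech5, Rmult_plus_distr_l, IH, Nat.ltb_irrefl.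
    rewrite (sum_f_R0_eq_but_last
      (fun n => (if (n <? S N)%nat then INR (S n) * a (S n) - INR n * a n
                 else - INR (S N) * a (S N)) * s ^ n)
      (fun n => (if (n <? N)%nat then INR (S n) * a (S n) - INR n * a n
                 else - INR N * a N) * s ^ n)).
    + rewrite Nat.ltb_irrefl, (proj2 (Nat.ltb_lt N (S N))) by lia.
      change (pred (S N)) with N; change (s ^ S N) with (s * s ^ N); ring.
    + intros n Hn; rewrite (proj2 (Nat.ltb_lt n N)), (proj2 (Nat.ltb_lt n (S N))) by lia.
      reflexivity.
Qed.

Lemma psum_pos (a : nat -> R) (N : nat) (s : R) :
  (forall n, 0 < a n) -> 0 < s -> 0 < psum a N s.
Proof.
  intros Ha Hs; unfold psum; induction N as [|N IH].
  - specialize (Ha 0%nat); simpl; lra.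
  - rewrite tech5; pose proof (Ha (S N)); pose proof (pow_lt s (S N) Hs); nra.
Qed.

Lemma pow_mul_le_swap (s1 s2 : R) (n m : nat) :
  0 <= s1 <= s2 -> (n <= m)%nat -> s2 ^ n * s1 ^ m <= s1 ^ n * s2 ^ m.
Proof.
  intros Hs Hnm; replace m with (n + (m - n))%nat by lia; rewrite !pow_add.
  assert (0 <= s1 ^ n * s2 ^ n) by (apply Rmult_le_pos; apply pow_le; lra).
  assert (s1 ^ (m - n) <= s2 ^ (m - n)) by (apply pow_incr; lra).
  nra.
Qed.

(* Cross-multiplied form of: if [q n / a n] decreases, so does
   [psum q N s / psum a N s] for [s >= 0]. *)
Lemma psum_ratio_antitone (q a : nat -> R) (N : nat) (s1 s2 : R) :
  0 <= s1 <= s2 -> (forall n, (n <= N)%nat -> 0 <= a n) ->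
  (forall n m, (n <= m <= N)%nat -> q m * a n <= q n * a m) ->
  psum q N s2 * psum a N s1 <= psum q N s1 * psum a N s2.
Proof.
  intros Hs Ha Hqa.
  set (U i j := (q i * a j - q j * a i) * (s2 ^ i * s1 ^ j - s1 ^ i * s2 ^ j)).
  assert (Hsym : sum_f_R0 (fun i => sum_f_R0 (fun j => U i j) N) N =
    2 * (psum q N s2 * psum a N s1 - psum q N s1 * psum a N s2)).
  { replace (2 * _) with
      ((psum q N s2 * psum a N s1 - psum q N s1 * psum a N s2) +
       (psum a N s1 * psum q N s2 - psum a N s2 * psum q N s1)) by ring.
    unfold psum; rewrite !sum_f_R0_mult, <- !minus_sum, <- plus_sum.
    apply sum_eq; intros i _; rewrite <- !minus_sum, <- plus_sum.
    apply sum_eq; intros j _; unfold U; ring. }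
  assert (Hneg : sum_f_R0 (fun i => sum_f_R0 (fun j => U i j) N) N <= 0).
  { apply sum_f_R0_nonpos; intros i Hi; apply sum_f_R0_nonpos; intros j Hj; unfold U.
    destruct (Nat.le_gt_cases i j) as [Hij|Hji].
    - pose proof (Hqa i j ltac:(lia)); pose proof (pow_mul_le_swap s1 s2 i j Hs Hij); nra.
    - pose proof (Hqa j i ltac:(lia)); pose proof (pow_mul_le_swap s1 s2 j i Hs ltac:(lia)); nra. }
  lra.
Qed.

Lemma midpoint_concave_of_deriv_antitone (f f' : R -> R) :
  (forall u, derivable_pt_lim f u (f' u)) ->
  (forall u v, u <= v -> f' v <= f' u) ->
  forall a b, f a + f b <= 2 * f ((a + b) / 2).
Proof.
  intros Hf Hf' a b.
  assert (Hlt : forall a b, a < b -> f a + f b <= 2 * f ((a + b) / 2)).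
  { clear a b; intros a b Hab; set (m := (a + b) / 2).
    destruct (MVT_cor2 f f' a m ltac:(unfold m; lra) (fun u _ => Hf u)) as [u [Hu Iu]].
    destruct (MVT_cor2 f f' m b ltac:(unfold m; lra) (fun v _ => Hf v)) as [v [Hv Iv]].
    assert (f' v <= f' u) by (apply Hf'; lra).
    assert (b - m = m - a) by (unfold m; lra).
    assert (0 < m - a) by (unfold m; lra).
    nra. }
  destruct (Rtotal_order a b) as [Hab|[<-|Hba]].
  - exact (Hlt a b Hab).
  - replace ((a + a) / 2) with a by field; lra.
  - replace ((a + b) / 2) with ((b + a) / 2) by field; specialize (Hlt b a Hba); lra.
Qed.

Lemma mul_le_sqr_of_ln (x y z : R) :
  0 < x -> 0 < y -> 0 < z -> ln x + ln y <= 2 * ln z -> x * y <= z ^ 2.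
Proof.
  intros Hx Hy Hz Hln; apply Rnot_lt_le; intros Hlt.
  apply ln_increasing in Hlt; [|apply pow_lt; exact Hz].
  rewrite ln_pow, ln_mult in Hlt by assumption; simpl INR in Hlt; lra.
Qed.

Definition logistic (u : R) : R := exp u / (1 + exp u).

Lemma logistic_bounds (u : R) : 0 < logistic u < 1.
Proof.
  unfold logistic; pose proof (exp_pos u); split.
  - apply Rdiv_lt_0_compat; lra.
  - apply Rmult_lt_reg_r with (1 + exp u); [lra|].
    field_simplify; lra.
Qed.

Lemma logistic_le (u v : R) : u <= v -> logistic u <= logistic v.
Proof.
  intros Huv; unfold logistic.
  assert (exp u <= exp v).
  { destruct Huv as [Hlt|<-]; [apply Rlt_le, exp_increasing, Hlt | lra]. }
  pose proof (exp_pos u); pose proof (exp_pos v).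
  apply Rmult_le_reg_r with ((1 + exp u) * (1 + exp v)); [nra|].
  field_simplify; lra.
Qed.

Lemma derivable_pt_lim_logistic (u : R) :
  derivable_pt_lim logistic u (logistic u * (1 - logistic u)).
Proof.
  pose proof (exp_pos u).
  assert (H1 : derivable_pt_lim (fun u => 1 + exp u) u (0 + exp u)).
  { apply (derivable_pt_lim_plus (fct_cte 1) exp);
      [apply derivable_pt_lim_const | apply derivable_pt_lim_exp]. }
  assert (Hd := derivable_pt_lim_div exp (fun u => 1 + exp u) u _ _
    (derivable_pt_lim_exp u) H1 ltac:(lra)).
  replace (logistic u * (1 - logistic u)) with
    ((exp u * (1 + exp u) - (0 + exp u) * exp u) / Rsqr (1 + exp u));
    [exact Hd | unfold logistic, Rsqr; field; lra].
Qed.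

Lemma hypF_sum (a b c x : R) :
  (exists l, infinite_sum (hyp_term a b c x) l) ->
  infinite_sum (hyp_term a b c x) (hypF a b c x).
Proof. exact (epsilon_spec (inhabits 0) _). Qed.

Lemma poch_pos (a : R) (n : nat) : 0 < a -> 0 < poch a n.
Proof.
  intros Ha; induction n as [|n IH]; simpl; [lra|].
  pose proof (pos_INR n); apply Rmult_lt_0_compat; lra.
Qed.

Section HypergeometricPartialSums.

Variables c d : R.
Hypotheses (hc : 0 < c) (hd : 0 < d).

Definition hcoef (n : nat) : R :=
  poch c n * poch d n / poch (c + d) n / INR (Factorial.fact n).

Lemma hyp_term_hcoef (s : R) (n : nat) : hyp_term c d (c + d) s n = hcoef n * s ^ n.
Proof. unfold hyp_term, hcoef, Rdiv; ring. Qed.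

Lemma hcoef_pos (n : nat) : 0 < hcoef n.
Proof.
  pose proof (poch_pos c n hc); pose proof (poch_pos d n hd).
  pose proof (poch_pos (c + d) n ltac:(lra)); pose proof (INR_fact_lt_0 n).
  unfold hcoef; repeat apply Rdiv_lt_0_compat; try apply Rmult_lt_0_compat; assumption.
Qed.

Lemma hcoef_S (n : nat) :
  hcoef (S n) = hcoef n * ((c + INR n) * (d + INR n) / ((c + d + INR n) * INR (S n))).
Proof.
  pose proof (poch_pos c n hc); pose proof (poch_pos d n hd).
  pose proof (poch_pos (c + d) n ltac:(lra)); pose proof (INR_fact_lt_0 n).
  pose proof (pos_INR n).
  unfold hcoef; simpl poch; rewrite fact_simpl, mult_INR, S_INR.
  field; repeat split; lra.
Qed.

Lemma one_sub_deriv_coef_hcoef (N n : nat) : (n < N)%nat ->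
  one_sub_deriv_coef hcoef N n = hcoef n * (c * d / (c + d + INR n)).
Proof.
  intros Hn; unfold one_sub_deriv_coef; rewrite (proj2 (Nat.ltb_lt n N) Hn).
  rewrite hcoef_S; pose proof (pos_INR n); rewrite S_INR; field; lra.
Qed.

Lemma one_sub_deriv_coef_hcoef_ratio (N n m : nat) : (n <= m <= N)%nat ->
  one_sub_deriv_coef hcoef N m * hcoef n <= one_sub_deriv_coef hcoef N n * hcoef m.
Proof.
  intros Hnm; pose proof (hcoef_pos n); pose proof (hcoef_pos m).
  pose proof (pos_INR n); pose proof (pos_INR m).
  destruct (Nat.lt_ge_cases m N) as [HmN|HmN].
  - rewrite !one_sub_deriv_coef_hcoef by lia.
    assert (c * d / (c + d + INR m) <= c * d / (c + d + INR n)).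
    { apply Rmult_le_compat_l; [nra|]; apply Rinv_le_contravar; [lra|].
      assert (INR n <= INR m) by (apply le_INR; lia); lra. }
    assert (0 < hcoef n * hcoef m) by nra; nra.
  - replace m with N in * by lia.
    destruct (Nat.lt_ge_cases n N) as [HnN|HnN]; [|replace n with N by lia; lra].
    rewrite (one_sub_deriv_coef_hcoef N n HnN).
    unfold one_sub_deriv_coef; rewrite Nat.ltb_irrefl.
    assert (0 <= c * d / (c + d + INR n)) by (apply Rle_mult_inv_pos; nra).
    pose proof (pos_INR N); assert (0 <= INR N * hcoef N * hcoef n) by (apply Rmult_le_pos; nra).
    assert (0 <= hcoef n * (c * d / (c + d + INR n)) * hcoef N) by (apply Rmult_le_pos; nra).
    lra.
Qed.

Hypothesis hcd : c * d <= c + d.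

Lemma hcoef_le_1 (n : nat) : hcoef n <= 1.
Proof.
  induction n as [|n IH]; [unfold hcoef; simpl; lra|].
  rewrite hcoef_S; pose proof (pos_INR n); pose proof (hcoef_pos n).
  assert (Hr : (c + INR n) * (d + INR n) / ((c + d + INR n) * INR (S n)) <= 1).
  { rewrite S_INR; apply Rmult_le_reg_r with ((c + d + INR n) * (INR n + 1)); [nra|].
    field_simplify; nra. }
  assert (0 <= (c + INR n) * (d + INR n) / ((c + d + INR n) * INR (S n))).
  { rewrite S_INR; apply Rle_mult_inv_pos; nra. }
  nra.
Qed.

Lemma one_sub_deriv_coef_hcoef_le (N n : nat) :
  (n <= N)%nat -> one_sub_deriv_coef hcoef N n <= hcoef n.
Proof.
  intros Hn; pose proof (hcoef_pos n); pose proof (pos_INR n).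
  destruct (Nat.lt_ge_cases n N) as [Hlt|Hge].
  - rewrite one_sub_deriv_coef_hcoef by exact Hlt.
    assert (c * d / (c + d + INR n) <= 1).
    { apply Rmult_le_reg_r with (c + d + INR n); [lra|]; field_simplify; lra. }
    nra.
  - unfold one_sub_deriv_coef; rewrite (proj2 (Nat.ltb_ge n N) Hge).
    replace N with n by lia; nra.
Qed.

(* The derivative of [u |-> ln (s F_N(s))] at [s = logistic u]. *)
Definition hlog_slope (N : nat) (s : R) : R :=
  1 - s * (1 - psum (one_sub_deriv_coef hcoef N) N s / psum hcoef N s).

Lemma hlog_slope_antitone (N : nat) (s1 s2 : R) :
  0 < s1 <= s2 -> hlog_slope N s2 <= hlog_slope N s1.
Proof.
  intros Hs; unfold hlog_slope.
  set (Q := psum (one_sub_deriv_coef hcoef N) N); set (F := psum hcoef N).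
  assert (HF1 : 0 < F s1) by (apply psum_pos; [exact hcoef_pos | lra]).
  assert (HF2 : 0 < F s2) by (apply psum_pos; [exact hcoef_pos | lra]).
  assert (Hcross : Q s2 * F s1 <= Q s1 * F s2).
  { apply psum_ratio_antitone; [lra | intros n _; apply Rlt_le, hcoef_pos |].
    exact (one_sub_deriv_coef_hcoef_ratio N). }
  assert (HQF : Q s1 <= F s1).
  { apply sum_Rle; intros n Hn; apply Rmult_le_compat_r;
      [apply pow_le; lra | exact (one_sub_deriv_coef_hcoef_le N n Hn)]. }
  assert (Hr : Q s2 / F s2 <= Q s1 / F s1).
  { apply Rmult_le_reg_r with (F s1 * F s2); [nra|].
    field_simplify; lra. }
  assert (Hr1 : Q s1 / F s1 <= 1).
  { apply Rmult_le_reg_r with (F s1); [lra|]; field_simplify; lra. }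
  nra.
Qed.

Lemma derivable_pt_lim_ln_logistic_psum (N : nat) (u : R) :
  derivable_pt_lim (fun u => ln (logistic u * psum hcoef N (logistic u))) u
    (hlog_slope N (logistic u)).
Proof.
  set (F := psum hcoef N); set (s := logistic u).
  assert (Hs : 0 < s < 1) by apply logistic_bounds.
  assert (HF : 0 < F s) by (apply psum_pos; [exact hcoef_pos | lra]).
  set (F' := sum_f_R0 (fun n => hcoef n * (INR n * s ^ pred n)) N).
  assert (Hprod : derivable_pt_lim (fun s => s * F s) s (1 * F s + s * F')).
  { apply (derivable_pt_lim_mult id F);
      [apply derivable_pt_lim_id | apply derivable_pt_lim_psum]. }
  assert (Hcomp := derivable_pt_lim_comp logistic (fun s => s * F s) u _ _
    (derivable_pt_lim_logistic u) Hprod).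
  assert (Hln := derivable_pt_lim_comp (comp (fun s => s * F s) logistic) ln u _ _
    Hcomp (derivable_pt_lim_ln (s * F s) ltac:(apply Rmult_lt_0_compat; lra))).
  replace (hlog_slope N s) with (/ (s * F s) * ((1 * F s + s * F') * (s * (1 - s))));
    [exact Hln|].
  unfold hlog_slope; rewrite <- one_sub_mul_deriv_psum; fold F' F; field; lra.
Qed.

Lemma psum_hcoef_logistic_midpoint (N : nat) (a b : R) :
  (logistic a * psum hcoef N (logistic a)) * (logistic b * psum hcoef N (logistic b))
  <= (logistic ((a + b) / 2) * psum hcoef N (logistic ((a + b) / 2))) ^ 2.
Proof.
  assert (Hpos : forall u, 0 < logistic u * psum hcoef N (logistic u)).
  { intros u; pose proof (logistic_bounds u).
    apply Rmult_lt_0_compat; [lra | apply psum_pos; [exact hcoef_pos | lra]]. }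
  apply mul_le_sqr_of_ln; try apply Hpos.
  apply (midpoint_concave_of_deriv_antitone
    (fun u => ln (logistic u * psum hcoef N (logistic u)))
    (fun u => hlog_slope N (logistic u))).
  - exact (derivable_pt_lim_ln_logistic_psum N).
  - intros u v Huv; apply hlog_slope_antitone.
    pose proof (logistic_bounds u); split; [lra | apply logistic_le, Huv].
Qed.

Lemma psum_hcoef_cv (s : R) :
  0 < s < 1 -> Un_cv (fun N => psum hcoef N s) (hypF c d (c + d) s).
Proof.
  intros Hs.
  assert (Hterm : forall N, psum hcoef N s = sum_f_R0 (hyp_term c d (c + d) s) N).
  { intros N; apply sum_eq; intros n _; symmetry; apply hyp_term_hcoef. }
  assert (Hgrow : Un_growing (fun N => psum hcoef N s)).
  { intros N; unfold psum; rewrite tech5.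
    pose proof (hcoef_pos (S N)); pose proof (pow_lt s (S N) ltac:(lra)); nra. }
  assert (Hbound : has_ub (fun N => psum hcoef N s)).
  { exists (/ (1 - s)); intros y [N ->]; unfold psum.
    apply Rle_trans with (sum_f_R0 (fun n => s ^ n) N).
    - apply sum_Rle; intros n _; pose proof (hcoef_le_1 n); pose proof (hcoef_pos n).
      pose proof (pow_lt s n ltac:(lra)); nra.
    - rewrite tech3 by lra; pose proof (pow_lt s (S N) ltac:(lra)).
      apply Rmult_le_reg_r with (1 - s); [lra|]; field_simplify; lra. }
  destruct (growing_cv _ Hgrow Hbound) as [l Hl].
  assert (Hsum : infinite_sum (hyp_term c d (c + d) s) (hypF c d (c + d) s)).
  { apply hypF_sum; exists l; intros eps Heps; destruct (Hl eps Heps) as [N HN].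
    exists N; intros n Hn; rewrite <- Hterm; exact (HN n Hn). }
  intros eps Heps; destruct (Hsum eps Heps) as [N HN].
  exists N; intros n Hn; rewrite Hterm; exact (HN n Hn).
Qed.

End HypergeometricPartialSums.

Lemma g_logistic_midpoint (c d a b : R) :
  0 < c -> 0 < d -> c * d <= c + d ->
  g c d (logistic a) * g c d (logistic b) <= g c d (logistic ((a + b) / 2)) ^ 2.
Proof.
  intros hc hd hcd.
  set (phi N u := logistic u * psum (hcoef c d) N (logistic u)); set (m := (a + b) / 2).
  assert (Hcv : forall u, Un_cv (fun N => phi N u) (g c d (logistic u))).
  { intros u; apply CV_mult; [intros eps Heps; exists 0%nat; intros n _;
      unfold Rdist; rewrite Rminus_diag, Rabs_R0; exact Heps |].
    apply psum_hcoef_cv; [exact hc | exact hd | exact hcd | apply logistic_bounds]. }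
  rewrite <- Rsqr_pow2; unfold Rsqr.
  apply Rle_cv_lim with (Un := fun N => phi N a * phi N b) (Vn := fun N => phi N m * phi N m).
  - intros N; pose proof (psum_hcoef_logistic_midpoint c d hc hd hcd N a b) as H.
    rewrite <- Rsqr_pow2 in H; exact H.
  - apply CV_mult; apply Hcv.
  - apply CV_mult; apply Hcv.
Qed.

Theorem mainTheorem15 (c d : R) (hc : 0 < c) (hd : 0 < d)
  (hcd : / c + / d >= 1) (x p q : R) (hx : 0 < x) :
  g c d (Rpower x p / (1 + Rpower x p)) * g c d (Rpower x q / (1 + Rpower x q))
  <= (g c d (Rpower x ((p + q) / 2) / (1 + Rpower x ((p + q) / 2)))) ^ 2.
Proof.
  assert (Hcd : c * d <= c + d).
  { replace (c + d) with (c * d * (/ c + / d)) by (field; lra).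
    assert (0 < c * d) by nra; nra. }
  unfold Rpower; replace ((p + q) / 2 * ln x) with ((p * ln x + q * ln x) / 2) by field.
  exact (g_logistic_midpoint c d (p * ln x) (q * ln x) hc hd Hcd).
Qed.
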